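(* Let $(Q,\cdot)$ be a groupoid of order $n$ with elements ordered as $q_1,\dots,q_n$. If $Q$ is $(n-1)$-translatable with respect to this ordering, then $Q$ is commutative.
   Context: A finite groupoid $(Q,\cdot)$ with ordering $q_1,\dots,q_n$ of its elements is $k$-translatable ($1\le k<n$) with respect to this ordering if for all $i\in\{2,\dots,n\}$ and $j\in\{1,\dots,n\}$, $q_i\cdot q_j=q_{i-1}\cdot q_{j-k}$, where the index $j-k$ is taken modulo $n$ in $\{1,\dots,n\}$; i.e. each row of the Cayley table is obtained from the previous one by moving its last $k$ entries to the front. *)

From mathcomp Require Import all_boot.
Set Implicit Arguments. Unset Strict Implicit. Unset Printing Implicit Defensive.

(* insubd d m is the ordinal with value m when m < n (always the case here). *)
(* An ordering q_1,...,q_n of its elements is a bijection q : 'I_n -> T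
   (0-indexed: q 0, ..., q (n-1)).
   k-translatable (1 <= k < n): for all rows i in {1..n-1} (0-indexed: i = 1..n-1,
   i.e. paper's i in {2..n}) and all columns j,
      q_i * q_j = q_{i-1} * q_{(j - k) mod n}. *)
Definition k_translatable (T : finType) (op : T -> T -> T) (n : nat)
  (q : 'I_n -> T) (k : nat) : Prop :=
  (1 <= k < n) /\
  forall (i j : 'I_n), 0 < i ->
    op (q i) (q j) =
    op (q (insubd i i.-1)) (q (insubd j ((j + n - k) %% n))).

Definition commutative_groupoid (T : finType) (op : T -> T -> T) : Prop :=
  forall x y : T, op x y = op y x.

From mathcomp Require Import all_boot.

Set Implicit Arguments.
Unset Strict Implicit.

(* For k = n - 1, each row of the Cayley table is the previous one shifted
   left by one place: q_i q_j = q_(i-1) q_(j+1).  Iterating down to row 0 gives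
   q_i q_j = q_0 q_(i+j mod n), which is symmetric in i and j. *)

Section TranslatableByPred.

Variables (T : finType) (op : T -> T -> T) (n : nat) (q : 'I_n.+1 -> T).
Hypothesis transl : k_translatable op q n.

Lemma insubd_inord (d : 'I_n.+1) m : m < n.+1 -> insubd d m = inord m.
Proof. by move=> lt_m; apply: val_inj; rewrite val_insubd /= inordK lt_m. Qed.

Lemma translatable_shift (i j : 'I_n.+1) : 0 < i ->
  op (q i) (q j) = op (q (inord i.-1)) (q (inord (j.+1 %% n.+1))).
Proof.
move=> i_gt0; have [_ shift] := transl.
have lt_pred_i : i.-1 < n.+1 by rewrite (leq_ltn_trans (leq_pred i)).
rewrite shift // !insubd_inord ?ltn_mod //.
by rewrite addnS -addSn addnK.
Qed.

Lemma translatable_row0 (i j : 'I_n.+1) :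
  op (q i) (q j) = op (q ord0) (q (inord ((i + j) %% n.+1))).
Proof.
case: i => m; elim: m j => [|m IH] j lt_m.
  by rewrite add0n modn_small // inord_val; congr (op (q _) _); apply: val_inj.
rewrite translatable_shift //= (inord_val (Ordinal (ltnW lt_m))) IH.
by rewrite inordK ?ltn_mod // modnDmr addnS.
Qed.

End TranslatableByPred.

Theorem proposition8p4 (T : finType) (op : T -> T -> T) (n : nat)
  (q : 'I_n -> T) :
  #|T| = n -> bijective q ->
  k_translatable op q n.-1 ->
  commutative_groupoid op.
Proof.
case: n q => [|n] q _ [q' _ qK] transl x y; first by case: transl.
rewrite -(qK x) -(qK y) (translatable_row0 transl (q' x)).
by rewrite (translatable_row0 transl (q' y)) addnC.
Qed.
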